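(* Let $d\ge 2$. There are a constant $C>0$ and $n_0(d)$ depending only on $d$ such that for all $n\ge n_0(d)$ the following holds. Let $\mathcal{F}$, $B_i$ be as in the context, let $J\subseteq[n]$ with $|J|\le n/4$, and let $K\ge 0$ be a real number with $|E(\mathcal{G}_J)|\ge\binom{n-|J|}{d}-Kn$. Let $\mathcal{S}\subseteq\binom{[n]\setminus J}{d-1}$ be the family of $(d-1)$-subsets of $[n]\setminus J$ that are contained in at most $100d+|J|$ edges of $\mathcal{G}_J$. Then $|\mathcal{S}|\le CK$.
   Context: Let $\mathcal{F}=\{F_1,\dots,F_m\}\subseteq\binom{[n]}{d+1}$ consist of distinct sets and have VC-dimension at most $d$ (no $(d+1)$-set $S$ is shattered, i.e. no $S$ such that every $A\subseteq S$ equals $F\cap S$ for some $F\in\mathcal{F}$). For $i\in[m]$, call $B\subsetneq F_i$ admissible for $F_i$ if $F\cap F_i\neq B$ for every $F\in\mathcal{F}$. For each $i$, $B_i$ is a fixed admissible set for $F_i$ of maximum cardinality among all admissible sets. For $J\subseteq[n]$, $\mathcal{G}_J$ is the $d$-uniform hypergraph on vertex set $[n]\setminus J$ with edge set $E(\mathcal{G}_J):=\{F_k\setminus J: k\in[m],\ |F_k\cap J|=1\}$. *)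

From mathcomp Require Import all_boot.
From Stdlib Require Import Reals.
Set Implicit Arguments. Unset Strict Implicit. Unset Printing Implicit Defensive.

(* Ground set [n] is 'I_n. A family F = {F_1,...,F_m} of distinct sets is a
   finite set of subsets of 'I_n. *)

Definition shattered (n : nat) (Fam : {set {set 'I_n}}) (S : {set 'I_n}) : Prop :=
  forall A : {set 'I_n}, A \subset S -> exists2 F, F \in Fam & F :&: S = A.

Definition VCdim_le (n : nat) (Fam : {set {set 'I_n}}) (d : nat) : Prop :=
  forall S : {set 'I_n}, #|S| = d.+1 -> ~ shattered Fam S.

Definition uniform (n : nat) (Fam : {set {set 'I_n}}) (k : nat) : Prop :=
  forall F, F \in Fam -> #|F| = k.

Definition edgesG (n : nat) (Fam : {set {set 'I_n}}) (J : {set 'I_n}) : {set {set 'I_n}} :=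
  [set F :\: J | F in Fam & #|F :&: J| == 1].

Definition lowdeg_sets (n : nat) (Fam : {set {set 'I_n}}) (J : {set 'I_n}) (d : nat)
  : {set {set 'I_n}} :=
  [set T : {set 'I_n} | [&& T \subset ~: J, #|T| == d.-1 &
      #|[set e in edgesG Fam J | T \subset e]| <= 100 * d + #|J| ]].

From mathcomp Require Import all_boot zify.
From Stdlib Require Import Reals Lra.

Set Implicit Arguments.

(* Call a d-subset of [n]\J a non-edge if it is not an edge of G_J; there are
   at most Kn of them.  Count pairs (T, e) with T a low-degree (d-1)-set and
   e a non-edge containing T.  A non-edge contains only d sets of size d-1,
   while each low-degree T has n-|J|-(d-1) one-point extensions inside [n]\J,
   of which at most 100d+|J| are edges, so at least n/4 are non-edges once
   n >= 404d.  Hence |S| n/4 <= dKn, i.e. |S| <= 4dK. *)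

Lemma double_counting (X Y : finType) (A : {set X}) (B : {set Y})
    (r : X -> Y -> bool) :
  \sum_(x in A) #|[set y in B | r x y]| = \sum_(y in B) #|[set x in A | r x y]|.
Proof.
have card_sum (Z : finType) (C : {set Z}) (p : pred Z) :
    #|[set z in C | p z]| = \sum_(z in C) p z.
  by rewrite -sum1dep_card big_mkcondr /=; apply: eq_bigr => z _; case: (p z).
under eq_bigr do rewrite card_sum.
by rewrite exchange_big; apply: eq_bigr => y _; rewrite card_sum.
Qed.

Lemma card_subsets_predn (T : finType) (e : {set T}) : 0 < #|e| ->
  #|[set A : {set T} | A \subset e & #|A| == #|e|.-1]| = #|e|.
Proof. by rewrite cards_draws; case: #|e| => // m _; rewrite binSn. Qed.

Lemma card_imset_setU1 (T : finType) (U A : {set T}) : A \subset U ->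
  #|[set x |: A | x in U :\: A]| = #|U| - #|A|.
Proof.
move=> sAU; rewrite card_in_imset; first by rewrite cardsD (setIidPr sAU).
move=> x y; rewrite !inE => /andP [xA _] /andP [yA _] Exy.
have : x \in y |: A by rewrite -Exy setU11.
by rewrite in_setU1 (negbTE xA) orbF => /eqP.
Qed.

Section LowDegreeSets.

Variables (n d : nat) (Fam : {set {set 'I_n}}) (J : {set 'I_n}).
Hypotheses (d_gt0 : 0 < d) (Fam_unif : uniform Fam d.+1).

Let dsets := [set A : {set 'I_n} | A \subset ~: J & #|A| == d].
Let nonedges := dsets :\: edgesG Fam J.

Lemma edgesG_sub_dsets : edgesG Fam J \subset dsets.
Proof.
apply/subsetP => e /imsetP [F]; rewrite inE => /andP [FFam /eqP FJ] ->.
rewrite inE; apply/andP; split.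
  by apply/subsetP => x; rewrite !inE => /andP [].
by apply/eqP; have := cardsID J F; rewrite (Fam_unif FFam) FJ; lia.
Qed.

Lemma card_nonedges : #|nonedges| = 'C(n - #|J|, d) - #|edgesG Fam J|.
Proof.
rewrite cardsD (setIidPr edgesG_sub_dsets) cards_draws.
by have -> : #|~: J| = n - #|J| by have := cardsC J; rewrite card_ord; lia.
Qed.

Lemma sum_nonedges_over_lowdeg :
  \sum_(T in lowdeg_sets Fam J d) #|[set e in nonedges | T \subset e]|
    <= d * #|nonedges|.
Proof.
rewrite double_counting mulnC -sum_nat_const.
apply: leq_sum => e; rewrite !inE => /andP [_ /andP [_ /eqP card_e]].
apply: leq_trans (_ : _ <= #|[set A : {set 'I_n} | A \subset e & #|A| == d.-1]|) _.
  apply: subset_leq_card; apply/subsetP => T; rewrite !inE.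
  by case/andP => /and3P [_ -> _] ->.
by rewrite -card_e card_subsets_predn ?card_e.
Qed.

Lemma nonedges_over_lowdeg T : T \in lowdeg_sets Fam J d ->
  n - #|J| - d.-1 - (100 * d + #|J|) <= #|[set e in nonedges | T \subset e]|.
Proof.
rewrite inE => /and3P [TJ /eqP card_T low_T].
set ext := [set x |: T | x in ~: J :\: T].
set edges_T := [set e in edgesG Fam J | T \subset e] in low_T *.
have ext_sub : ext :\: edges_T \subset [set e in nonedges | T \subset e].
  apply/subsetP => e /setDP [/imsetP [x]]; rewrite !inE => /andP [xT xJ] ->.
  rewrite subsetU1 andbT => /negbTE ->.
  by rewrite cardsU1 xT card_T subUset sub1set !inE xJ TJ; apply/eqP; lia.
have card_ext : #|ext| = n - #|J| - d.-1.
  by rewrite card_imset_setU1 // card_T; have := cardsC J; rewrite card_ord; lia.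
have := subset_leq_card ext_sub; rewrite cardsD card_ext.
have : #|ext :&: edges_T| <= #|edges_T| by apply/subset_leq_card/subsetIr.
lia.
Qed.

Lemma card_lowdeg_mul_le :
  #|lowdeg_sets Fam J d| * (n - #|J| - d.-1 - (100 * d + #|J|))
    <= d * ('C(n - #|J|, d) - #|edgesG Fam J|).
Proof.
rewrite -card_nonedges -sum_nat_const.
apply: leq_trans sum_nonedges_over_lowdeg.
exact: leq_sum nonedges_over_lowdeg.
Qed.

End LowDegreeSets.

Lemma INR_subn_le (a b : nat) (x : R) :
  (0 <= x)%R -> (INR b >= INR a - x)%R -> (INR (a - b) <= x)%R.
Proof.
move=> x_ge0 bound; case: (leqP b a) => [/leP b_le_a | /ltnW a_le_b].
  by rewrite minus_INR //; lra.
by have -> : a - b = 0 by lia.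
Qed.

Theorem fact3p7 :
  forall d : nat, 2 <= d ->
  exists C : R, (0 < C)%R /\
  exists n0 : nat, forall n : nat, n0 <= n ->
  forall (Fam : {set {set 'I_n}}),
    uniform Fam d.+1 -> VCdim_le Fam d ->
  forall (J : {set 'I_n}), 4 * #|J| <= n ->
  forall K : R, (0 <= K)%R ->
    (INR #|edgesG Fam J| >= INR 'C(n - #|J|, d) - K * INR n)%R ->
    (INR #|lowdeg_sets Fam J d| <= C * K)%R.
Proof.
move=> d d_ge2; exists (INR (4 * d)); split; first by apply/lt_0_INR/ltP; lia.
exists (404 * d) => n n_large Fam Fam_unif _ J J_small K K_ge0 many_edges.
have := card_lowdeg_mul_le J (ltnW d_ge2) Fam_unif.
set S := #|lowdeg_sets _ _ _|; set missing := _ - #|edgesG _ _| => counted.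
have S_n : S * n <= 4 * d * missing.
  apply: leq_trans (_ : S * (4 * (n - #|J| - d.-1 - (100 * d + #|J|))) <= _).
    by rewrite leq_mul2l; apply/orP; right; lia.
  by rewrite mulnCA -mulnA leq_mul2l counted orbT.
have missing_le : (INR missing <= K * INR n)%R.
  by apply: INR_subn_le => //; have := pos_INR n; nra.
have n_pos : (0 < INR n)%R by apply/lt_0_INR/ltP; lia.
apply: (Rmult_le_reg_r (INR n)) => //.
apply: Rle_trans (_ : INR (4 * d) * INR missing <= _)%R.
  by rewrite -!mult_INR; apply/le_INR/leP.
by rewrite Rmult_assoc; apply/Rmult_le_compat_l/missing_le/pos_INR.
Qed.
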